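(* Let $G$ be an $(\alpha,\beta,N)$-admissible group. There exist $\alpha',\beta'>0$ (depending only on $\alpha,\beta,N$) such that for every finitely generated subgroup $H\le G$, exactly one of the following holds: (i) $H$ has a finite-index subgroup with infinite centre; (ii) $H$ is $(\alpha',\beta')$-perfect.
   Context: For a subset $U$ of a group, $U^n=\{u_1\cdots u_n:u_i\in U\}$. A finite subset $U$ has $(\alpha,\beta)$-growth if $|U^n|\ge(\alpha|U|)^{\beta n}$ for all $n\in\mathbb{N}$. A finitely generated group is $(\alpha,\beta)$-perfect if every finite generating set of every finite-index subgroup of it has $(\alpha,\beta)$-growth. A group $G$ is $(\alpha,\beta,N)$-admissible if for every finitely generated subgroup $H\le G$ there exist a subgroup $K\le H$ of index at most $N$ and a torsion-free subgroup $T\le Z(K)$ such that $K/T$ is $(\alpha,\beta)$-perfect. *)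

From Stdlib Require Import Reals Lia List Classical FunctionalExtensionality
  PropExtensionality ProofIrrelevance.
Open Scope R_scope.

Record Group := mkGroup {
  gcar :> Type;
  gmul : gcar -> gcar -> gcar;
  gone : gcar;
  ginv : gcar -> gcar;
  gassoc : forall x y z, gmul x (gmul y z) = gmul (gmul x y) z;
  gmul1g : forall x, gmul gone x = x;
  gmulg1 : forall x, gmul x gone = x;
  gmulVg : forall x, gmul (ginv x) x = gone;
  gmulgV : forall x, gmul x (ginv x) = gone }.

Arguments gmul {g}.
Arguments gone {g}.
Arguments ginv {g}.
Arguments gassoc {g} x y z.
Arguments gmul1g {g} x.
Arguments gmulg1 {g} x.
Arguments gmulVg {g} x.
Arguments gmulgV {g} x.

Definition subset {T : Type} (A B : T -> Prop) := forall x, A x -> B x.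

Definition card_is {T : Type} (A : T -> Prop) (n : nat) : Prop :=
  exists l : list T, NoDup l /\ (forall x, In x l <-> A x) /\ length l = n.

Definition finite_pred {T : Type} (A : T -> Prop) : Prop := exists n, card_is A n.

Definition is_subgroup (G : Group) (H : G -> Prop) : Prop :=
  H gone /\ (forall x y, H x -> H y -> H (gmul x y)) /\ (forall x, H x -> H (ginv x)).

Definition gen (G : Group) (U : G -> Prop) : G -> Prop :=
  fun x => forall L, is_subgroup G L -> subset U L -> L x.

Definition generates (G : Group) (U L : G -> Prop) : Prop :=
  forall x, gen G U x <-> L x.

Definition fg_sub (G : Group) (H : G -> Prop) : Prop :=
  exists U, finite_pred U /\ subset U H /\ generates G U H.

Definition index_le (G : Group) (L H : G -> Prop) (N : nat) : Prop :=
  exists l : list G, (length l <= N)%nat /\ (forall x, In x l -> H x) /\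
    forall h, H h -> exists x, In x l /\ L (gmul (ginv x) h).

Definition finite_index (G : Group) (L H : G -> Prop) : Prop :=
  exists N, index_le G L H N.

Definition center (G : Group) (K : G -> Prop) : G -> Prop :=
  fun x => K x /\ forall y, K y -> gmul x y = gmul y x.

Fixpoint gpow {G : Group} (x : G) (n : nat) : G :=
  match n with O => gone | S m => gmul x (gpow x m) end.

Definition torsion_free (G : Group) (T : G -> Prop) : Prop :=
  forall x, T x -> forall n, (1 <= n)%nat -> gpow x n = gone -> x = gone.

Fixpoint pow_set {G : Group} (U : G -> Prop) (n : nat) : G -> Prop :=
  match n with
  | O => fun x => x = gone
  | S m => fun x => exists u y, U u /\ pow_set U m y /\ x = gmul u y
  end.

(** real power a^x, with the convention a^x = 0 for a <= 0 (only a = 0 occurs). *)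
Definition rpow (a x : R) : R := if Rle_dec a 0 then 0 else Rpower a x.

Definition has_growth (G : Group) (U : G -> Prop) (alpha beta : R) : Prop :=
  finite_pred U /\
  forall cu, card_is U cu -> forall (n c : nat), (1 <= n)%nat ->
    card_is (pow_set U n) c -> rpow (alpha * INR cu) (beta * INR n) <= INR c.

Definition perfect_sub (G : Group) (H : G -> Prop) (alpha beta : R) : Prop :=
  fg_sub G H /\
  forall L, is_subgroup G L -> subset L H -> finite_index G L H ->
    forall U, finite_pred U -> subset U L -> generates G U L ->
      has_growth G U alpha beta.

Definition perfect (G : Group) (alpha beta : R) : Prop :=
  perfect_sub G (fun _ => True) alpha beta.

Definition coset (G : Group) (k : G) (T : G -> Prop) : G -> Prop :=
  fun x => exists t, T t /\ x = gmul k t.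
Definition setmul (G : Group) (A B : G -> Prop) : G -> Prop :=
  fun x => exists a b, A a /\ B b /\ x = gmul a b.
Definition setinv (G : Group) (A : G -> Prop) : G -> Prop :=
  fun x => exists a, A a /\ x = ginv a.
Definition is_coset (G : Group) (K T : G -> Prop) (S : G -> Prop) : Prop :=
  exists k, K k /\ S = coset G k T.
Definition qcar (G : Group) (K T : G -> Prop) : Type := {S : G -> Prop | is_coset G K T S}.

Lemma inv_mul (G : Group) (x y : G) : ginv (gmul x y) = gmul (ginv y) (ginv x).
Proof.
  assert (E : gmul (gmul x y) (gmul (ginv y) (ginv x)) = gone).
  { rewrite <- gassoc, (gassoc y), gmulgV, gmul1g, gmulgV. reflexivity. }
  rewrite <- (gmulg1 (ginv (gmul x y))), <- E, gassoc, gmulVg, gmul1g.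
  reflexivity.
Qed.

Lemma inv_inv (G : Group) (x : G) : ginv (ginv x) = x.
Proof.
  transitivity (gmul (ginv (ginv x)) (gmul (ginv x) x)).
  - rewrite gmulVg, gmulg1; reflexivity.
  - rewrite gassoc, gmulVg, gmul1g; reflexivity.
Qed.

Section Quot.
Variables (G : Group) (K T : G -> Prop).
Hypotheses (hK : is_subgroup G K) (hT : is_subgroup G T)
  (hZ : subset T (center G K)).

Lemma coset_mul k k' : K k' ->
  setmul G (coset G k T) (coset G k' T) = coset G (gmul k k') T.
Proof.
  destruct hT as [T1 [TM TI]]. intro Kk'.
  apply functional_extensionality; intro x; apply propositional_extensionality; split.
  - intros [a [b [[t [Tt ->]] [[t' [Tt' ->]] ->]]]].
    exists (gmul t t'). split; [apply TM; auto|].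
    assert (ct : gmul t k' = gmul k' t) by exact (proj2 (hZ t Tt) k' Kk').
    rewrite <- !gassoc. f_equal. rewrite gassoc, ct, <- gassoc. reflexivity.
  - intros [t [Tt ->]]. exists (gmul k t), k'. split; [exists t; auto|].
    split; [exists gone; split; [auto| rewrite gmulg1; reflexivity]|].
    assert (ct : gmul t k' = gmul k' t) by exact (proj2 (hZ t Tt) k' Kk').
    rewrite <- !gassoc, ct. reflexivity.
Qed.

Lemma coset_inv k : K k -> setinv G (coset G k T) = coset G (ginv k) T.
Proof.
  destruct hT as [T1 [TM TI]]. destruct hK as [K1 [KM KI]]. intro Kk.
  apply functional_extensionality; intro x; apply propositional_extensionality; split.
  - intros [a [[t [Tt ->]] ->]]. exists (ginv t); split; [apply TI; auto|].
    rewrite inv_mul. exact (proj2 (hZ _ (TI _ Tt)) _ (KI _ Kk)).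
  - intros [t [Tt ->]]. exists (gmul k (ginv t)). split; [exists (ginv t); auto|].
    rewrite inv_mul, inv_inv. symmetry. exact (proj2 (hZ t Tt) _ (KI _ Kk)).
Qed.

Lemma qmul_ok S1 S2 : is_coset G K T S1 -> is_coset G K T S2 ->
  is_coset G K T (setmul G S1 S2).
Proof.
  destruct hK as [K1 [KM KI]].
  intros [k1 [Kk1 ->]] [k2 [Kk2 ->]]. exists (gmul k1 k2).
  split; [apply KM; auto| apply coset_mul; auto].
Qed.

Lemma qinv_ok S : is_coset G K T S -> is_coset G K T (setinv G S).
Proof.
  destruct hK as [K1 [KM KI]].
  intros [k [Kk ->]]. exists (ginv k). split; [apply KI; auto| apply coset_inv; auto].
Qed.

Lemma qone_ok : is_coset G K T (coset G gone T).
Proof. destruct hK as [K1 _]. exists gone; auto. Qed.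

Definition qmul (x y : qcar G K T) : qcar G K T :=
  exist _ (setmul G (proj1_sig x) (proj1_sig y)) (qmul_ok _ _ (proj2_sig x) (proj2_sig y)).
Definition qinv (x : qcar G K T) : qcar G K T :=
  exist _ (setinv G (proj1_sig x)) (qinv_ok _ (proj2_sig x)).
Definition qone : qcar G K T := exist _ (coset G gone T) qone_ok.

Lemma qeq (x y : qcar G K T) : proj1_sig x = proj1_sig y -> x = y.
Proof.
  destruct x as [x px], y as [y py]; simpl; intros ->. f_equal. apply proof_irrelevance.
Qed.

Lemma qassoc x y z : qmul x (qmul y z) = qmul (qmul x y) z.
Proof.
  destruct hK as [K1 [KM KI]].
  destruct x as [A [a [Ka ->]]], y as [B [b [Kb ->]]], z as [C [c [Kc ->]]].
  apply qeq; simpl.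
  rewrite (coset_mul b c Kc), (coset_mul a (gmul b c) (KM _ _ Kb Kc)),
    (coset_mul a b Kb), (coset_mul (gmul a b) c Kc), gassoc.
  reflexivity.
Qed.

Lemma qmul1 x : qmul qone x = x.
Proof.
  destruct x as [A [a [Ka ->]]]. apply qeq; simpl.
  rewrite (coset_mul gone a Ka), gmul1g. reflexivity.
Qed.

Lemma qmulr1 x : qmul x qone = x.
Proof.
  destruct hK as [K1 [KM KI]].
  destruct x as [A [a [Ka ->]]]. apply qeq; simpl.
  rewrite (coset_mul a gone K1), gmulg1. reflexivity.
Qed.

Lemma qmulV x : qmul (qinv x) x = qone.
Proof.
  destruct x as [A [a [Ka ->]]]. apply qeq; simpl.
  rewrite (coset_inv a Ka), (coset_mul (ginv a) a Ka), gmulVg. reflexivity.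
Qed.

Lemma qmulrV x : qmul x (qinv x) = qone.
Proof.
  destruct hK as [K1 [KM KI]].
  destruct x as [A [a [Ka ->]]]. apply qeq; simpl.
  rewrite (coset_inv a Ka), (coset_mul a (ginv a) (KI _ Ka)), gmulgV. reflexivity.
Qed.

Definition quot_group : Group :=
  mkGroup (qcar G K T) qmul qone qinv qassoc qmul1 qmulr1 qmulV qmulrV.

End Quot.


Definition admissible (G : Group) (alpha beta : R) (N : nat) : Prop :=
  forall H, is_subgroup G H -> fg_sub G H ->
    exists K T (hK : is_subgroup G K) (hT : is_subgroup G T)
      (hZ : subset T (center G K)),
      subset K H /\ index_le G K H N /\ torsion_free G T /\
      perfect (quot_group G K T hK hT hZ) alpha beta.

Definition virt_inf_center (G : Group) (H : G -> Prop) : Prop :=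
  exists L, is_subgroup G L /\ subset L H /\ finite_index G L H /\
    ~ finite_pred (center G L).

(* If some finite-index subgroup L of H has infinite centre, take a finite generating
   set V0 of L and add m central elements of L: as these commute with everything,
   |U^n| <= (n+1)^(m+1) |V0|^n for the enlarged generating set U, while uniform growth
   would force |U^n| >= (alpha' m)^(beta' n); taking m, then n, large gives a
   contradiction for any alpha', beta' > 0.

   Otherwise let L <= H have finite index and finite generating set U. Admissibility
   gives K <= L of index at most N and a torsion-free central T with K/T perfect; as
   Z(K) is finite, T is trivial and K itself is (alpha, beta)-perfect. Its Schreier
   generators V are words of length at most k = (N+1)^2 in U, and |U| <= (N+1) |V| and
   |V^m| <= (k m + 1) |U^n| for k m <= n; this transfers the growth of V to U with
   constants depending only on alpha, beta and N. *)

From Stdlib Require Import Reals Lia List Classical ClassicalEpsilon Lra.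
Open Scope R_scope.

Lemma subgroup_one {G : Group} {H : G -> Prop} : is_subgroup G H -> H gone.
Proof. intros [h _]; exact h. Qed.

Lemma subgroup_mul {G : Group} {H : G -> Prop} :
  is_subgroup G H -> forall x y, H x -> H y -> H (gmul x y).
Proof. intros [_ [h _]]; exact h. Qed.

Lemma subgroup_inv {G : Group} {H : G -> Prop} :
  is_subgroup G H -> forall x, H x -> H (ginv x).
Proof. intros [_ [_ h]]; exact h. Qed.

Lemma mulKg {G : Group} (x y : G) : gmul (ginv x) (gmul x y) = y.
Proof. rewrite gassoc, gmulVg, gmul1g; reflexivity. Qed.

Lemma mulKVg {G : Group} (x y : G) : gmul x (gmul (ginv x) y) = y.
Proof. rewrite gassoc, gmulgV, gmul1g; reflexivity. Qed.

Lemma invg1 {G : Group} : ginv (@gone G) = gone.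
Proof. rewrite <- (gmul1g (ginv gone)), gmulgV; reflexivity. Qed.

Ltac gsimp := repeat (rewrite ?inv_mul, ?inv_inv, ?invg1, <- ?gassoc, ?mulKg, ?mulKVg,
  ?gmulVg, ?gmulgV, ?gmul1g, ?gmulg1).

Lemma gpow_add {G : Group} (x : G) a b : gpow x (a + b) = gmul (gpow x a) (gpow x b).
Proof.
  induction a as [|a IH]; simpl; [rewrite gmul1g; reflexivity|].
  rewrite IH, gassoc; reflexivity.
Qed.

Lemma gpow_succ_r {G : Group} (x : G) m : gpow x (S m) = gmul (gpow x m) x.
Proof. replace (S m) with (m + 1)%nat by lia. rewrite gpow_add; simpl; rewrite gmulg1; reflexivity. Qed.

Lemma subgroup_gpow {G : Group} {H : G -> Prop} :
  is_subgroup G H -> forall x n, H x -> H (gpow x n).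
Proof.
  intros hH x n hx; induction n; simpl; [apply (subgroup_one hH)| apply (subgroup_mul hH); auto].
Qed.

Lemma gen_subgroup {G : Group} (U : G -> Prop) : is_subgroup G (gen G U).
Proof.
  split; [|split].
  - intros L hL _. apply (subgroup_one hL).
  - intros x y hx hy L hL hU. apply (subgroup_mul hL); [apply hx| apply hy]; auto.
  - intros x hx L hL hU. apply (subgroup_inv hL); apply hx; auto.
Qed.

Lemma sub_gen {G : Group} (U : G -> Prop) : subset U (gen G U).
Proof. intros x hx L hL hU; auto. Qed.

Lemma gen_min {G : Group} (U L : G -> Prop) : is_subgroup G L -> subset U L -> subset (gen G U) L.
Proof. intros hL hU x hx; apply hx; auto. Qed.

Lemma generates_sub {G : Group} (U L : G -> Prop) : generates G U L -> subset U L.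
Proof. intros hgen x hx. apply (proj1 (hgen x)), sub_gen, hx. Qed.

Lemma pow_set1 {G : Group} (U : G -> Prop) x : U x -> pow_set U 1 x.
Proof. intro h; exists x, gone; simpl; repeat split; auto. rewrite gmulg1; reflexivity. Qed.

Lemma pow_set_add {G : Group} (U : G -> Prop) a b x y :
  pow_set U a x -> pow_set U b y -> pow_set U (a + b) (gmul x y).
Proof.
  revert x; induction a as [|a IH]; intros x hx hy; simpl in *.
  - subst x; rewrite gmul1g; exact hy.
  - destruct hx as [u [x' [hu [hx' ->]]]]. exists u, (gmul x' y).
    split; [exact hu| split; [apply IH; auto| symmetry; apply gassoc]].
Qed.

Lemma pow_set_gpow {G : Group} (U : G -> Prop) u n : U u -> pow_set U n (gpow u n).
Proof. intro hu; induction n; simpl; [reflexivity| exists u, (gpow u n); auto]. Qed.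

Lemma pow_set_gpow_word {G : Group} (U : G -> Prop) w j n :
  pow_set U j w -> pow_set U (n * j) (gpow w n).
Proof. intro hw; induction n; simpl; [reflexivity| apply pow_set_add; auto]. Qed.

Lemma pow_set_subgroup {G : Group} (U L : G -> Prop) :
  is_subgroup G L -> subset U L -> forall n x, pow_set U n x -> L x.
Proof.
  intros hL hUL n; induction n as [|n IH]; simpl; intros x hx.
  - subst; apply (subgroup_one hL).
  - destruct hx as [u [y [hu [hy ->]]]]. apply (subgroup_mul hL); auto.
Qed.

Lemma pow_set_of_bounded_words {G : Group} (U V : G -> Prop) k :
  (forall x, V x -> exists j, (j <= k)%nat /\ pow_set U j x) ->
  forall m x, pow_set V m x -> exists j, (j <= k * m)%nat /\ pow_set U j x.
Proof.
  intros hV m; induction m as [|m IH]; simpl; intros x hx.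
  - exists 0%nat; split; [lia| exact hx].
  - destruct hx as [u [y [hu [hy ->]]]].
    destruct (hV u hu) as [j1 [hj1 h1]], (IH y hy) as [j2 [hj2 h2]].
    exists (j1 + j2)%nat; split; [nia| apply pow_set_add; auto].
Qed.

Definition lprod {G : Group} (l : list G) : G := fold_right gmul gone l.

Lemma lprod_app {G : Group} (l1 l2 : list G) : lprod (l1 ++ l2) = gmul (lprod l1) (lprod l2).
Proof.
  induction l1 as [|a l1 IH]; simpl; [rewrite gmul1g; reflexivity|].
  rewrite IH, gassoc; reflexivity.
Qed.

Lemma pow_set_lprod {G : Group} (U : G -> Prop) n x : pow_set U n x ->
  exists l, length l = n /\ (forall y, In y l -> U y) /\ x = lprod l.
Proof.
  revert x; induction n as [|n IH]; simpl; intros x hx.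
  - exists nil; simpl; repeat split; auto. intros y [].
  - destruct hx as [u [y [hu [hy ->]]]]. destruct (IH y hy) as [l [hl [hlU ->]]].
    exists (u :: l); simpl; repeat split; auto. intros z [<-|hz]; auto.
Qed.

Lemma lprod_pow_set {G : Group} (U : G -> Prop) l :
  (forall y, In y l -> U y) -> pow_set U (length l) (lprod l).
Proof. induction l as [|a l IH]; simpl; intros h; auto. exists a, (lprod l); repeat split; auto. Qed.

Definition card_at_most {T : Type} (A : T -> Prop) (b : nat) : Prop :=
  exists l : list T, (length l <= b)%nat /\ forall x, A x -> In x l.

Lemma card_at_most_sub {T} (A B : T -> Prop) b b' :
  subset A B -> card_at_most B b -> (b <= b')%nat -> card_at_most A b'.
Proof. intros h [l [hl hin]] hb. exists l; split; [lia| auto]. Qed.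

Lemma card_is_at_most {T} (A : T -> Prop) n : card_is A n -> card_at_most A n.
Proof. intros [l [_ [h e]]]. exists l; split; [lia| intros x hx; apply h; auto]. Qed.

Lemma card_is_ext {T} (A B : T -> Prop) n : (forall x, A x <-> B x) -> card_is A n -> card_is B n.
Proof.
  intros hAB [l [hnd [hin hl]]]. exists l; split; [exact hnd| split; [|exact hl]].
  intro x; rewrite hin; apply hAB.
Qed.

Lemma card_is_le {T} (A : T -> Prop) n b : card_is A n -> card_at_most A b -> (n <= b)%nat.
Proof.
  intros [l [hnd [h e]]] [l' [hl' hin]].
  assert (hincl : incl l l') by (intros x hx; apply hin, h; auto).
  pose proof (NoDup_incl_length hnd hincl). lia.
Qed.

Lemma card_at_most_card_is {T} (A : T -> Prop) b :
  card_at_most A b -> exists n, card_is A n /\ (n <= b)%nat.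
Proof.
  intros [l [hl hin]].
  set (dec := fun x y : T => excluded_middle_informative (x = y)).
  set (inA := fun x => if excluded_middle_informative (A x) then true else false).
  set (l' := nodup dec (filter inA l)).
  assert (hl' : forall x, In x l' <-> A x).
  { intro x. unfold l', inA. rewrite nodup_In, filter_In.
    destruct (excluded_middle_informative (A x)); split; intros h; try tauto.
    - split; auto.
    - destruct h as [_ h]; discriminate. }
  assert (hnd : NoDup l') by apply NoDup_nodup.
  exists (length l'); split; [exists l'; auto|].
  assert (hincl : incl l' l) by (intros x hx; apply hin, hl'; auto).
  pose proof (NoDup_incl_length hnd hincl); lia.
Qed.

Lemma card_at_most_finite {T} (A : T -> Prop) b : card_at_most A b -> finite_pred A.
Proof. intro h; destruct (card_at_most_card_is A b h) as [n [hn _]]; exists n; auto. Qed.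

Lemma card_at_most_image {T T'} (A : T -> Prop) (B : T' -> Prop) (f : T -> T') b :
  card_at_most A b -> (forall y, B y -> exists x, A x /\ y = f x) -> card_at_most B b.
Proof.
  intros [l [hl hin]] h. exists (map f l); split; [rewrite length_map; auto|].
  intros y hy. destruct (h y hy) as [x [hx ->]]. apply in_map; auto.
Qed.

Lemma length_flat_map_le {A B} (f : A -> list B) (l : list A) c :
  (forall a, In a l -> (length (f a) <= c)%nat) -> (length (flat_map f l) <= length l * c)%nat.
Proof.
  induction l as [|a l IH]; simpl; intros h; auto. rewrite length_app.
  pose proof (h a (or_introl eq_refl)). pose proof (IH (fun b hb => h b (or_intror hb))). lia.
Qed.

Lemma card_at_most_mul {G : Group} (A B C : G -> Prop) p q :
  card_at_most A p -> card_at_most B q ->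
  (forall x, C x -> exists a b, A a /\ B b /\ x = gmul a b) -> card_at_most C (p * q).
Proof.
  intros [la [hla ina]] [lb [hlb inb]] h.
  exists (flat_map (fun a => map (gmul a) lb) la). split.
  - eapply Nat.le_trans; [apply length_flat_map_le with (c := q)|].
    + intros a _; rewrite length_map; auto.
    + apply Nat.mul_le_mono_r; auto.
  - intros x hx. destruct (h x hx) as [a [b [hA [hB ->]]]].
    apply in_flat_map. exists a; split; auto. apply in_map; auto.
Qed.

Lemma card_at_most_union_list {T I} (A : I -> T -> Prop) (l : list I) c (C : T -> Prop) :
  (forall i, In i l -> card_at_most (A i) c) ->
  (forall x, C x -> exists i, In i l /\ A i x) -> card_at_most C (length l * c).
Proof.
  revert C; induction l as [|a l IH]; simpl; intros C hc hC.
  - exists nil; split; auto. intros x hx; destruct (hC x hx) as [i [[] _]].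
  - destruct (hc a (or_introl eq_refl)) as [la [hla ina]].
    destruct (IH (fun x => exists i, In i l /\ A i x) (fun i hi => hc i (or_intror hi))
      (fun x hx => hx)) as [lr [hlr inr]].
    exists (la ++ lr); split; [rewrite length_app; lia|].
    intros x hx. apply in_or_app.
    destruct (hC x hx) as [i [[<-|hi] hA]]; [left; auto| right; apply inr; eauto].
Qed.

Lemma card_at_most_union_nat {T} (A : nat -> T -> Prop) (C : T -> Prop) n c :
  (forall i, (i < n)%nat -> card_at_most (A i) c) ->
  (forall x, C x -> exists i, (i < n)%nat /\ A i x) -> card_at_most C (n * c).
Proof.
  intros hc hC. rewrite <- (length_seq n 0). apply (card_at_most_union_list A).
  - intros i hi; apply in_seq in hi; apply hc; lia.
  - intros x hx; destruct (hC x hx) as [i [hi hA]]; exists i; split; auto; apply in_seq; lia.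
Qed.

Lemma card_at_most_pow_set {G : Group} (A : G -> Prop) p :
  card_at_most A p -> forall n, card_at_most (pow_set A n) (p ^ n).
Proof.
  intros h n; induction n; simpl.
  - exists (gone :: nil); split; [simpl; auto| intros x ->; left; auto].
  - apply (card_at_most_mul A (pow_set A n)); auto.
Qed.

Lemma pow_set_union_sort {G : Group} (A B : G -> Prop) :
  (forall b a y, B b -> pow_set A a y -> gmul b y = gmul y b) ->
  forall n x, pow_set (fun z => A z \/ B z) n x ->
  exists a c y z, (a + c = n)%nat /\ pow_set A a y /\ pow_set B c z /\ x = gmul y z.
Proof.
  intros hcomm n; induction n as [|n IH]; simpl; intros x hx.
  - exists 0%nat, 0%nat, gone, gone; simpl; repeat split; auto. subst; rewrite gmul1g; auto.
  - destruct hx as [w [x' [hw [hx' ->]]]].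
    destruct (IH x' hx') as [a [c [y [z [hac [hy [hz ->]]]]]]].
    destruct hw as [hw|hw].
    + exists (S a), c, (gmul w y), z. repeat split; [lia| exists w, y; auto| auto| apply gassoc].
    + exists a, (S c), y, (gmul w z). repeat split; [lia| auto| exists w, z; auto|].
      rewrite gassoc, (hcomm w a y hw hy), <- gassoc. reflexivity.
Qed.

Lemma card_at_most_pow_set_union {G : Group} (A B : G -> Prop) n ca cb :
  (forall b a y, B b -> pow_set A a y -> gmul b y = gmul y b) ->
  (forall a, (a <= n)%nat -> card_at_most (pow_set A a) ca) ->
  (forall c, (c <= n)%nat -> card_at_most (pow_set B c) cb) ->
  card_at_most (pow_set (fun z => A z \/ B z) n) (S n * (ca * cb)).
Proof.
  intros hc ha hb.
  apply (card_at_most_union_nat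
    (fun a x => exists y z, pow_set A a y /\ pow_set B (n - a) z /\ x = gmul y z)).
  - intros a ha'. apply (card_at_most_mul (pow_set A a) (pow_set B (n - a)));
      [apply ha; lia| apply hb; lia| auto].
  - intros x hx. destruct (pow_set_union_sort A B hc n x hx) as [a [c [y [z [e [hy [hz ->]]]]]]].
    exists a; split; [lia|]. exists y, z. replace (n - a)%nat with c by lia. auto.
Qed.

(* Left translation by a power of [u0] injects [U^j] into [U^n]. *)
Lemma card_at_most_pow_set_le {G : Group} (U : G -> Prop) u0 n j c :
  U u0 -> (j <= n)%nat -> card_at_most (pow_set U n) c -> card_at_most (pow_set U j) c.
Proof.
  intros hu hj hc. apply (card_at_most_image _ _ (gmul (ginv (gpow u0 (n - j)))) c hc).
  intros y hy. exists (gmul (gpow u0 (n - j)) y). split; [|rewrite mulKg; auto].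
  replace n with (n - j + j)%nat at 1 by lia. apply pow_set_add; auto. apply pow_set_gpow; auto.
Qed.

Lemma card_le_card_pow_set {G : Group} (U : G -> Prop) cu n c :
  (1 <= n)%nat -> card_is U cu -> card_is (pow_set U n) c -> (cu <= c)%nat.
Proof.
  intros hn hcu hc. pose proof hcu as [[|u0 l] [_ [hin hl]]]; [simpl in hl; lia|].
  apply (card_is_le U cu c); [exact hcu|].
  apply (card_at_most_sub U (pow_set U 1) c c); [intros x; apply pow_set1| |lia].
  apply (card_at_most_pow_set_le U u0 n 1 c);
    [apply hin; left; auto| exact hn| apply card_is_at_most, hc].
Qed.

Lemma nodup_map_seq {A : Type} (g : nat -> A) m : forall a,
  (forall i j, (a <= i)%nat -> (i < j)%nat -> (j < a + m)%nat -> g i <> g j) ->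
  NoDup (map g (seq a m)).
Proof.
  induction m as [|m IH]; intros a h; simpl; constructor.
  - intro hin. apply in_map_iff in hin. destruct hin as [j [hj hin]]. apply in_seq in hin.
    exact (h a j ltac:(lia) ltac:(lia) ltac:(lia) (eq_sym hj)).
  - apply IH; intros; apply h; lia.
Qed.

Lemma pigeonhole {A : Type} (g : nat -> A) (l : list A) m :
  (forall i, (i < m)%nat -> In (g i) l) -> (length l < m)%nat ->
  exists i j, (i < j)%nat /\ (j < m)%nat /\ g i = g j.
Proof.
  intros hin hlen. apply NNPP; intro hno.
  assert (hnd : NoDup (map g (seq 0 m))).
  { apply nodup_map_seq. intros i j _ hij hj e. apply hno. exists i, j; simpl in hj; auto. }
  assert (hincl : incl (map g (seq 0 m)) l).
  { intros y hy. apply in_map_iff in hy. destruct hy as [i [<- hi]]. apply in_seq in hi.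
    apply hin; lia. }
  pose proof (NoDup_incl_length hnd hincl) as hlen'. rewrite length_map, length_seq in hlen'. lia.
Qed.

(** * Schreier's lemma *)

Lemma index_le_pigeonhole {G : Group} (K L : G -> Prop) n0 (f : nat -> G) :
  is_subgroup G K -> index_le G K L n0 -> (forall i, (i <= n0)%nat -> L (f i)) ->
  exists i j, (i < j)%nat /\ (j <= n0)%nat /\ K (gmul (ginv (f i)) (f j)).
Proof.
  intros hK [l [hl [_ hcov]]] hf.
  set (r := fun i => epsilon (inhabits (@gone G)) (fun x => In x l /\ K (gmul (ginv x) (f i)))).
  assert (hr : forall i, (i <= n0)%nat -> In (r i) l /\ K (gmul (ginv (r i)) (f i))).
  { intros i hi. apply epsilon_spec. destruct (hcov (f i) (hf i hi)) as [x hx]. exists x; auto. }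
  destruct (pigeonhole r l (S n0)) as [i [j [hij [hj e]]]]; [intros i hi; apply hr; lia| lia|].
  exists i, j; split; [lia| split; [lia|]].
  destruct (hr i ltac:(lia)) as [_ hi], (hr j ltac:(lia)) as [_ hj']. rewrite e in hi.
  replace (gmul (ginv (f i)) (f j))
    with (gmul (ginv (gmul (ginv (r j)) (f i))) (gmul (ginv (r j)) (f j))) by (gsimp; reflexivity).
  apply (subgroup_mul hK); [apply (subgroup_inv hK)|]; auto.
Qed.

Lemma index_le_gpow {G : Group} (K L : G -> Prop) n0 x :
  is_subgroup G K -> is_subgroup G L -> index_le G K L n0 -> L x ->
  exists D, (1 <= D <= n0)%nat /\ K (gpow x D).
Proof.
  intros hK hL hidx hx.
  destruct (index_le_pigeonhole K L n0 (gpow x) hK hidx) as [a [b [hab [hb hk]]]];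
    [intros; apply (subgroup_gpow hL); auto|].
  exists (b - a)%nat; split; [lia|].
  replace b with (a + (b - a))%nat in hk by lia. rewrite gpow_add, mulKg in hk. exact hk.
Qed.

Lemma index_le_weaken {G : Group} (K L : G -> Prop) n n' :
  (n <= n')%nat -> index_le G K L n -> index_le G K L n'.
Proof. intros h [l [hl r]]. exists l; split; [lia| exact r]. Qed.

Lemma index_le_trans {G : Group} (K L H : G -> Prop) n1 n2 :
  is_subgroup G H -> subset L H ->
  index_le G K L n1 -> index_le G L H n2 -> index_le G K H (n2 * n1).
Proof.
  intros hH hLH [ly [hly [inly covy]]] [lx [hlx [inlx covx]]].
  exists (flat_map (fun x => map (gmul x) ly) lx). split; [|split].
  - eapply Nat.le_trans; [apply length_flat_map_le with (c := n1)|].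
    + intros a _; rewrite length_map; auto.
    + apply Nat.mul_le_mono_r; auto.
  - intros z hz. apply in_flat_map in hz. destruct hz as [x [hx hz]]. apply in_map_iff in hz.
    destruct hz as [y [<- hy]]. apply (subgroup_mul hH); auto.
  - intros h hh. destruct (covx h hh) as [x [hx hxh]]. destruct (covy _ hxh) as [y [hy hyh]].
    exists (gmul x y). split; [apply in_flat_map; exists x; split; auto; apply in_map; auto|].
    replace (gmul (ginv (gmul x y)) h) with (gmul (ginv y) (gmul (ginv x) h)) by (gsimp; reflexivity).
    exact hyh.
Qed.

Definition schreier_set {G : Group} (U K : G -> Prop) (k : nat) : G -> Prop :=
  fun x => K x /\ exists j, (1 <= j <= k)%nat /\ pow_set U j x.

Lemma card_at_most_schreier_set {G : Group} (U K : G -> Prop) k cu :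
  card_at_most U cu -> card_at_most (schreier_set U K k) (S k * S cu ^ k).
Proof.
  intros hU. apply (card_at_most_union_nat (fun j => pow_set U j)).
  - intros i hi. apply (card_at_most_sub _ _ (cu ^ i) _ (fun x h => h));
      [apply card_at_most_pow_set; exact hU|].
    apply Nat.le_trans with (S cu ^ i)%nat; [apply Nat.pow_le_mono_l| apply Nat.pow_le_mono_r]; lia.
  - intros x [_ [j [hj hp]]]. exists j; split; [lia| exact hp].
Qed.

Section Schreier.

Variables (G : Group) (U L K : G -> Prop) (n0 : nat).
Hypotheses (hL : is_subgroup G L) (hgen : generates G U L) (hK : is_subgroup G K)
  (hKL : subset K L) (hidx : index_le G K L n0) (hn0 : (1 <= n0)%nat).

Let Sg := gen G (schreier_set U K (n0 * n0)).

Let hS : is_subgroup G Sg := gen_subgroup _.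

Lemma schreier_gen_sub : subset Sg K.
Proof. apply gen_min; [exact hK| intros x [hx _]; exact hx]. Qed.

Lemma pow_set_sub_L j x : pow_set U j x -> L x.
Proof. apply (pow_set_subgroup U L hL (generates_sub U L hgen)). Qed.

Lemma schreier_gen_mem j y : (j <= n0 * n0)%nat -> K y -> pow_set U j y -> Sg y.
Proof.
  intros hj hy hp. destruct j as [|j].
  - simpl in hp; subst; apply (subgroup_one hS).
  - apply sub_gen. split; [exact hy|]. exists (S j); split; [lia| exact hp].
Qed.

(* With [w^D] in [K] for some [1 <= D <= n0], write [w^-1 x] as the quotient of
   [w^D] and [w^(D-1) x], two elements of [K] of length at most [n0^2]. *)
Lemma schreier_gen_quotient j w i x :
  (j < n0)%nat -> (i < 2 * n0)%nat -> pow_set U j w -> pow_set U i x ->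
  K (gmul (ginv w) x) -> Sg (gmul (ginv w) x).
Proof.
  intros hj hi hw hx hwx.
  destruct (index_le_gpow K L n0 w hK hL hidx (pow_set_sub_L j w hw)) as [D [hD hKD]].
  set (c := gpow w (D - 1)).
  assert (hcw : gmul c w = gpow w D) by (unfold c; rewrite <- gpow_succ_r; f_equal; lia).
  assert (hScw : Sg (gmul c w)).
  { rewrite hcw. apply (schreier_gen_mem (D * j)); [nia| exact hKD| apply pow_set_gpow_word; auto]. }
  assert (hKcx : K (gmul c x)).
  { replace (gmul c x) with (gmul (gmul c w) (gmul (ginv w) x)) by (gsimp; reflexivity).
    apply (subgroup_mul hK); [rewrite hcw|]; auto. }
  assert (hScx : Sg (gmul c x)).
  { apply (schreier_gen_mem ((D - 1) * j + i)); [nia| exact hKcx|].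
    apply pow_set_add; [apply pow_set_gpow_word|]; auto. }
  replace (gmul (ginv w) x) with (gmul (ginv (gmul c w)) (gmul c x)) by (gsimp; reflexivity).
  apply (subgroup_mul hS); [apply (subgroup_inv hS)|]; auto.
Qed.

Let short_coset (y : G) : Prop :=
  exists j w, (j < n0)%nat /\ pow_set U j w /\ Sg (gmul (ginv w) y).

(* Among the [n0 + 1] suffixes of a word of length [n0] two lie in the same coset of [K];
   cutting out the segment between them gives a shorter representative. *)
Lemma short_coset_pow_set_n0 x : pow_set U n0 x -> short_coset x.
Proof.
  intro hx. destruct (pow_set_lprod U n0 x hx) as [l [hl [hlU ->]]].
  assert (hsk : forall t y, In y (skipn t l) -> U y)
    by (intros t y hy; apply hlU; rewrite <- (firstn_skipn t l); apply in_or_app; right; auto).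
  assert (hfk : forall t y, In y (firstn t l) -> U y)
    by (intros t y hy; apply hlU; rewrite <- (firstn_skipn t l); apply in_or_app; left; auto).
  destruct (index_le_pigeonhole K L n0 (fun t => lprod (skipn t l)) hK hidx) as [a [b [hab [hb hk]]]].
  { intros t _. apply (pow_set_sub_L (length (skipn t l))), lprod_pow_set, hsk. }
  simpl in hk.
  set (w := gmul (lprod (firstn a l)) (lprod (skipn b l))).
  assert (hw : pow_set U (a + (n0 - b)) w).
  { apply pow_set_add.
    - replace a with (length (firstn a l)) at 1 by (rewrite length_firstn; lia).
      apply lprod_pow_set, hfk.
    - replace (n0 - b)%nat with (length (skipn b l)) at 1 by (rewrite length_skipn; lia).
      apply lprod_pow_set, hsk. }
  exists (a + (n0 - b))%nat, w. split; [lia| split; [exact hw|]].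
  assert (hKw : K (gmul (ginv w) (lprod l))).
  { rewrite <- (firstn_skipn a l), lprod_app. unfold w.
    replace (gmul (ginv (gmul (lprod (firstn a l)) (lprod (skipn b l))))
               (gmul (lprod (firstn a l)) (lprod (skipn a l))))
      with (ginv (gmul (ginv (lprod (skipn a l))) (lprod (skipn b l)))) by (gsimp; reflexivity).
    apply (subgroup_inv hK); exact hk. }
  apply (schreier_gen_quotient (a + (n0 - b)) w n0 (lprod l)); auto; lia.
Qed.

Lemma short_coset_mul_gen u g : U u -> short_coset g -> short_coset (gmul u g).
Proof.
  intros hu [j [w [hj [hw hs]]]].
  assert (huw : pow_set U (S j) (gmul u w)) by (exists u, w; auto).
  destruct (Nat.lt_ge_cases (S j) n0) as [hlt|hge].
  - exists (S j), (gmul u w). split; [exact hlt| split; [exact huw|]]. gsimp. exact hs.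
  - replace (S j) with n0 in huw by lia.
    destruct (short_coset_pow_set_n0 _ huw) as [j' [w' [hj' [hw' hs']]]].
    exists j', w'. split; [exact hj'| split; [exact hw'|]].
    replace (gmul (ginv w') (gmul u g)) with (gmul (gmul (ginv w') (gmul u w)) (gmul (ginv w) g))
      by (gsimp; reflexivity).
    apply (subgroup_mul hS); auto.
Qed.

Lemma short_coset_one : short_coset gone.
Proof.
  exists 0%nat, gone. split; [lia| split; [reflexivity|]].
  rewrite invg1, gmul1g; apply (subgroup_one hS).
Qed.

Lemma short_coset_pow_set j x : pow_set U j x -> short_coset x.
Proof.
  revert x; induction j as [|j IH]; intros x hx; simpl in hx.
  - subst; apply short_coset_one.
  - destruct hx as [u [y [hu [hy ->]]]]. apply short_coset_mul_gen; auto.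
Qed.

Lemma short_coset_mul_inv_gen u g : U u -> short_coset g -> short_coset (gmul (ginv u) g).
Proof.
  intros hu [j [w [hj [hw hs]]]].
  destruct (index_le_pigeonhole K L n0 (fun t => gmul (gpow u t) w) hK hidx) as [a [b [hab [hb hk]]]].
  { intros t _. apply (subgroup_mul hL); [apply (subgroup_gpow hL)|];
      [apply (pow_set_sub_L 1), pow_set1, hu| exact (pow_set_sub_L j w hw)]. }
  simpl in hk.
  set (D := (b - a)%nat).
  assert (hD : gpow u b = gmul (gpow u a) (gpow u D)) by (rewrite <- gpow_add; f_equal; lia).
  assert (hKD : K (gmul (ginv w) (gmul (gpow u D) w))).
  { replace (gmul (ginv w) (gmul (gpow u D) w))
      with (gmul (ginv (gmul (gpow u a) w)) (gmul (gpow u b) w)) by (rewrite hD; gsimp; reflexivity).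
    exact hk. }
  assert (hSD : Sg (gmul (ginv w) (gmul (gpow u D) w))).
  { apply (schreier_gen_quotient j w (D + j)); auto; [lia|].
    apply pow_set_add; [apply pow_set_gpow|]; auto. }
  destruct (short_coset_pow_set (D - 1 + j) (gmul (gpow u (D - 1)) w))
    as [j' [w' [hj' [hw' hs']]]]; [apply pow_set_add; [apply pow_set_gpow|]; auto|].
  exists j', w'. split; [exact hj'| split; [exact hw'|]].
  assert (hD1 : gpow u D = gmul u (gpow u (D - 1)))
    by (replace D with (S (D - 1)) at 1 by lia; reflexivity).
  replace (gmul (ginv w') (gmul (ginv u) g)) with
    (gmul (gmul (gmul (ginv w') (gmul (gpow u (D - 1)) w))
                (ginv (gmul (ginv w) (gmul (gpow u D) w))))
          (gmul (ginv w) g)) by (rewrite hD1; gsimp; reflexivity).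
  apply (subgroup_mul hS); [apply (subgroup_mul hS); [|apply (subgroup_inv hS)]|]; auto.
Qed.

(* Schreier's lemma with an explicit length bound: the generators of [L] leave the set of
   short cosets invariant, so [L] consists of short cosets. *)
Lemma schreier : generates G (schreier_set U K (n0 * n0)) K.
Proof.
  set (Stab := fun x => forall y, short_coset y <-> short_coset (gmul x y)).
  assert (hStab : is_subgroup G Stab).
  { split; [|split].
    - intros y; rewrite gmul1g; tauto.
    - intros x1 x2 h1 h2 y. rewrite <- gassoc. rewrite (h2 y), (h1 (gmul x2 y)). tauto.
    - intros x h y. pose proof (h (gmul (ginv x) y)) as hh; rewrite mulKVg in hh; tauto. }
  assert (hUStab : subset U Stab).
  { intros u hu y; split; [apply short_coset_mul_gen; auto|].
    intro h. pose proof (short_coset_mul_inv_gen u _ hu h) as h'. rewrite mulKg in h'. exact h'. }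
  intro x; split; [apply schreier_gen_sub|]. intro hx.
  assert (hx' : short_coset x).
  { pose proof (proj1 (proj2 (hgen x) (hKL x hx) Stab hStab hUStab gone)) as h.
    rewrite gmulg1 in h. exact (h short_coset_one). }
  destruct hx' as [j [w [hj [hw hs]]]].
  assert (hKw : K w).
  { replace w with (gmul x (ginv (gmul (ginv w) x))) by (gsimp; reflexivity).
    apply (subgroup_mul hK); [exact hx| apply (subgroup_inv hK), schreier_gen_sub, hs]. }
  replace x with (gmul w (gmul (ginv w) x)) by apply mulKVg.
  apply (subgroup_mul hS); [apply (schreier_gen_mem j); [nia| |]|]; auto.
Qed.

End Schreier.

Lemma torsion_free_finite_trivial (G : Group) (T : G -> Prop) :
  is_subgroup G T -> torsion_free G T -> finite_pred T -> forall t, T t -> t = gone.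
Proof.
  intros hT htf [n [l [hnd [hin hl]]]] t ht.
  destruct (pigeonhole (gpow t) l (S n)) as [i [j [hij [hj e]]]];
    [intros i _; apply hin, (subgroup_gpow hT); auto| lia|].
  apply (htf t ht (j - i)%nat); [lia|].
  replace j with (i + (j - i))%nat in e by lia. rewrite gpow_add in e.
  rewrite <- (mulKg (gpow t i) (gpow t (j - i))), <- e. apply gmulVg.
Qed.

Section TrivialQuotient.

Variables (G : Group) (K T : G -> Prop).
Hypotheses (hK : is_subgroup G K) (hT : is_subgroup G T) (hZ : subset T (center G K)).
Hypothesis hT1 : forall t, T t -> t = gone.

(* Only the values on [K] matter; outside [K] the projection defaults to the unit. *)
Definition coset_proj (g : G) : qcar G K T :=
  match excluded_middle_informative (K g) with
  | left Kg => exist (is_coset G K T) (coset G g T) (ex_intro _ g (conj Kg eq_refl))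
  | right _ => qone G K T hK
  end.

Lemma coset_proj_val g : K g -> proj1_sig (coset_proj g) = coset G g T.
Proof.
  intro h. unfold coset_proj.
  destruct (excluded_middle_informative (K g)); [reflexivity| contradiction].
Qed.

Lemma coset_proj_mul a b : K a -> K b ->
  qmul G K T hK hT hZ (coset_proj a) (coset_proj b) = coset_proj (gmul a b).
Proof.
  intros ha hb. apply qeq. simpl. rewrite !coset_proj_val; auto; [|apply (subgroup_mul hK); auto].
  apply (coset_mul G K T hT hZ); auto.
Qed.

Lemma coset_proj_one : coset_proj gone = qone G K T hK.
Proof. apply qeq. rewrite coset_proj_val; [reflexivity| apply (subgroup_one hK)]. Qed.

Lemma coset_proj_inv a : K a -> qinv G K T hK hT hZ (coset_proj a) = coset_proj (ginv a).
Proof.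
  intro ha. apply qeq. simpl. rewrite !coset_proj_val; auto; [|apply (subgroup_inv hK); auto].
  apply (coset_inv G K T hK hT hZ); auto.
Qed.

Lemma coset_proj_inj a b : K a -> K b -> coset_proj a = coset_proj b -> a = b.
Proof.
  intros ha hb e. apply (f_equal (@proj1_sig _ _)) in e. rewrite !coset_proj_val in e; auto.
  assert (hca : coset G a T a)
    by (exists gone; split; [apply (subgroup_one hT)| rewrite gmulg1; reflexivity]).
  rewrite e in hca. destruct hca as [t [ht ->]]. rewrite (hT1 t ht), gmulg1; reflexivity.
Qed.

Lemma coset_proj_surj (S : qcar G K T) : exists g, K g /\ S = coset_proj g.
Proof.
  destruct S as [S [k [hk ->]]]. exists k; split; auto.
  apply qeq. rewrite coset_proj_val; auto.
Qed.

Let image (A : G -> Prop) (S : qcar G K T) : Prop := exists y, A y /\ S = coset_proj y.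

Lemma card_is_image A n : subset A K -> card_is A n -> card_is (image A) n.
Proof.
  intros hAK [l [hnd [hin hl]]]. exists (map coset_proj l). split; [|split].
  - apply NoDup_map_NoDup_ForallPairs; auto.
    intros a b ha hb e. apply coset_proj_inj; auto; apply hAK, hin; auto.
  - intro S. rewrite in_map_iff. split.
    + intros [y [<- hy]]. exists y; split; auto. apply hin; auto.
    + intros [y [hy ->]]. exists y; split; auto. apply hin; auto.
  - rewrite length_map; auto.
Qed.

Lemma pow_set_image V j (S : qcar G K T) : subset V K ->
  @pow_set (quot_group G K T hK hT hZ) (image V) j S <-> image (pow_set V j) S.
Proof.
  intro hVK. pose proof (pow_set_subgroup V K hK hVK) as hPK.
  revert S; induction j as [|j IH]; intro S; simpl.
  - split; [intros ->; exists gone; split; auto; symmetry; apply coset_proj_one|].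
    intros [y [-> ->]]. apply coset_proj_one.
  - split.
    + intros [u [y [[u0 [hu0 ->]] [hy ->]]]]. destruct (proj1 (IH y) hy) as [y0 [hy0 ->]].
      exists (gmul u0 y0); split; [exists u0, y0; auto|].
      apply coset_proj_mul; [apply hVK| eapply hPK]; eauto.
    + intros [y [[u [y0 [hu [hy0 ->]]]] ->]]. exists (coset_proj u), (coset_proj y0).
      split; [exists u; auto|]. split; [apply IH; exists y0; auto|].
      symmetry; apply coset_proj_mul; [apply hVK| eapply hPK]; eauto.
Qed.

Lemma generates_image V : subset V K -> generates G V K ->
  generates (quot_group G K T hK hT hZ) (image V) (fun _ => True).
Proof.
  intros hVK hgen S; split; auto. intros _. destruct (coset_proj_surj S) as [g [hg ->]].
  intros Lq hLq hVL.
  assert (hpre : is_subgroup G (fun h => K h /\ Lq (coset_proj h))).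
  { split; [|split].
    - split; [apply (subgroup_one hK)| rewrite coset_proj_one; apply (subgroup_one hLq)].
    - intros x y [hx1 hx2] [hy1 hy2]. split; [apply (subgroup_mul hK); auto|].
      rewrite <- coset_proj_mul; auto. apply (subgroup_mul hLq); auto.
    - intros x [hx1 hx2]. split; [apply (subgroup_inv hK); auto|].
      rewrite <- coset_proj_inv; auto. apply (subgroup_inv hLq); auto. }
  apply (proj2 (hgen g) hg _ hpre). intros x hx. split; [apply hVK; auto| apply hVL; exists x; auto].
Qed.

(* [K] is isomorphic to [K/T] via [coset_proj], so generating sets and their powers
   correspond with the same cardinalities. *)
Lemma growth_of_trivial_quotient (alpha beta : R) V :
  perfect (quot_group G K T hK hT hZ) alpha beta ->
  finite_pred V -> subset V K -> generates G V K -> has_growth G V alpha beta.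
Proof.
  intros [_ hp] hVf hVK hgen. split; [exact hVf|].
  intros cu hcu m c hm hc.
  set (Q := quot_group G K T hK hT hZ).
  assert (hQ : is_subgroup Q (fun _ => True)) by (split; [|split]; auto).
  assert (hfi : finite_index Q (fun _ => True) (fun _ => True)).
  { exists 1%nat, (gone :: nil). split; [simpl; lia| split; [auto|]].
    intros h _. exists gone; split; [left|]; auto. }
  assert (himg : card_is (image V) cu) by (apply card_is_image; auto).
  destruct (hp (fun _ => True) hQ (fun _ h => h) hfi (image V) (ex_intro _ cu himg)
    (fun _ _ => I) (generates_image V hVK hgen)) as [_ hg].
  apply (hg cu himg m c hm).
  apply (card_is_ext (image (pow_set V m))); [intro S; symmetry; apply pow_set_image; auto|].
  apply card_is_image; [intros x; apply (pow_set_subgroup V K hK hVK)| exact hc].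
Qed.

End TrivialQuotient.

(** * Finite centres: transfer of growth *)

Lemma not_virt_inf_center_sub (G : Group) (H L : G -> Prop) :
  is_subgroup G H -> subset L H -> finite_index G L H ->
  ~ virt_inf_center G H -> ~ virt_inf_center G L.
Proof.
  intros hH hLH [n hLi] hnv [K [hK [hKL [[m hKi] hinf]]]]. apply hnv.
  exists K; split; [exact hK| split; [intros x hx; apply hLH, hKL, hx|]].
  split; [exists (n * m)%nat; apply (index_le_trans K L H m n); auto| exact hinf].
Qed.

(* Finiteness of the centre forces the torsion-free central subgroup to be trivial,
   so admissibility makes a subgroup of bounded index itself perfect. *)
Lemma admissible_growth_subgroup (G : Group) alpha beta N (L : G -> Prop) :
  admissible G alpha beta N -> is_subgroup G L -> fg_sub G L -> ~ virt_inf_center G L ->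
  exists K, is_subgroup G K /\ subset K L /\ index_le G K L N /\
    forall V, finite_pred V -> subset V K -> generates G V K -> has_growth G V alpha beta.
Proof.
  intros hadm hL hfg hnv.
  destruct (hadm L hL hfg) as [K [T [hK [hT [hZ [hKL [hidx [htf hperf]]]]]]]].
  exists K; split; [exact hK| split; [exact hKL| split; [exact hidx|]]].
  assert (hZf : finite_pred (center G K)).
  { apply NNPP; intro hinf. apply hnv.
    exists K; split; [exact hK| split; [exact hKL| split; [exists N; exact hidx| exact hinf]]]. }
  assert (hTf : finite_pred T).
  { destruct hZf as [nz hz]. apply (card_at_most_finite T nz).
    apply (card_at_most_sub T (center G K) nz nz); [exact hZ| apply card_is_at_most, hz| lia]. }
  intros V hVf hVK hgen.
  exact (growth_of_trivial_quotient G K T hK hT hZ (torsion_free_finite_trivial G T hT htf hTf)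
    alpha beta V hperf hVf hVK hgen).
Qed.

(* A word of length [m] in the Schreier generators is a word of length at most
   [n0^2 m <= n] in [U], and each [U^j] with [j <= n] is no larger than [U^n]. *)
Lemma card_schreier_pow_set {G : Group} (U K : G -> Prop) n0 u0 n c m :
  U u0 -> card_at_most (pow_set U n) c -> (n0 * n0 * m <= n)%nat ->
  card_at_most (pow_set (schreier_set U K (n0 * n0)) m) (S (n0 * n0 * m) * c).
Proof.
  intros hu0 hc hm. apply (card_at_most_union_nat (fun j => pow_set U j)).
  - intros i hi. apply (card_at_most_pow_set_le U u0 n i c); auto. lia.
  - intros x hx.
    destruct (pow_set_of_bounded_words U (schreier_set U K (n0 * n0)) (n0 * n0)) with m x
      as [j [hj hp]]; [intros y [_ [j [hj hp]]]; exists j; split; [lia| exact hp]| exact hx|].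
    exists j; split; [lia| exact hp].
Qed.

Section SchreierCounting.

Variables (G : Group) (U L K : G -> Prop) (n0 : nat).
Hypotheses (hL : is_subgroup G L) (hUL : subset U L) (hK : is_subgroup G K)
  (hidx : index_le G K L n0).

Let V := schreier_set U K (n0 * n0).

(* If [u1] lies in the coset [x K] and [u1^D] in [K], then [u |-> u1^(D-1) u] maps the
   generators in [x K] injectively into [V]. *)
Lemma card_at_most_gens_in_coset x v :
  (1 <= n0)%nat -> card_is V v -> card_at_most (fun u => U u /\ K (gmul (ginv x) u)) v.
Proof.
  intros hn0 hv.
  destruct (classic (exists u1, U u1 /\ K (gmul (ginv x) u1))) as [[u1 [hu1 hxu1]]| hno];
    [|exists nil; split; [simpl; lia| intros u hu; exfalso; apply hno; exists u; exact hu]].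
  destruct (index_le_gpow K L n0 u1 hK hL hidx (hUL u1 hu1)) as [D [hD hKD]].
  apply (card_at_most_image V _ (gmul (ginv (gpow u1 (D - 1)))) v (card_is_at_most V v hv)).
  intros u [hu hxu]. exists (gmul (gpow u1 (D - 1)) u). split; [|rewrite mulKg; reflexivity].
  assert (hD1 : gpow u1 D = gmul (gpow u1 (D - 1)) u1) by (rewrite <- gpow_succ_r; f_equal; lia).
  split.
  - replace (gmul (gpow u1 (D - 1)) u)
      with (gmul (gpow u1 D) (gmul (ginv (gmul (ginv x) u1)) (gmul (ginv x) u)))
      by (rewrite hD1; gsimp; reflexivity).
    apply (subgroup_mul hK); [exact hKD| apply (subgroup_mul hK); [apply (subgroup_inv hK)|]; auto].
  - exists (D - 1 + 1)%nat. split; [nia|]. apply pow_set_add; [apply pow_set_gpow| apply pow_set1]; auto.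
Qed.

Lemma card_gens_le_index_mul cu v :
  (1 <= n0)%nat -> card_is U cu -> card_is V v -> (cu <= n0 * v)%nat.
Proof.
  intros hn0 hcu hv. pose proof hidx as [l [hl [_ hcov]]].
  apply (Nat.le_trans _ (length l * v)); [|nia].
  apply (card_is_le U cu _ hcu).
  apply (card_at_most_union_list (fun x u => U u /\ K (gmul (ginv x) u)) l v);
    [intros x _; apply card_at_most_gens_in_coset; auto|].
  intros u hu. destruct (hcov u (hUL u hu)) as [x [hx hxu]]. exists x; auto.
Qed.

End SchreierCounting.

Lemma rpow_pos a x : 0 < a -> rpow a x = Rpower a x.
Proof. intro h; unfold rpow; destruct (Rle_dec a 0); [lra| reflexivity]. Qed.

Lemma rpow_nonpos a x : a <= 0 -> rpow a x = 0.
Proof. intro h; unfold rpow; destruct (Rle_dec a 0); [reflexivity| lra]. Qed.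

Lemma Rpower_1_base y : Rpower 1 y = 1.
Proof. unfold Rpower; rewrite ln_1, Rmult_0_r, exp_0; reflexivity. Qed.

Lemma Rpower_le_max_one x y : 0 < x -> 0 <= y -> x <= 1 \/ y <= 1 -> Rpower x y <= Rmax 1 x.
Proof.
  intros hx hy hxy. destruct (Rle_lt_dec x 1) as [hx1|hx1].
  - apply Rle_trans with 1; [|apply Rmax_l]. rewrite <- (Rpower_1_base y). apply Rle_Rpower_l; lra.
  - destruct hxy as [|hy1]; [lra|]. apply Rle_trans with x; [|apply Rmax_r].
    rewrite <- (Rpower_1 x) at 2; [apply Rle_Rpower; lra| exact hx].
Qed.

Lemma succ_mul_le_pow k m : (1 <= k)%nat -> (k * m + 1 <= (2 * k) ^ m)%nat.
Proof.
  intros hk; induction m as [|m IH]; [simpl; lia|].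
  rewrite Nat.pow_succ_r'. nia.
Qed.

Definition schreier_len (N : nat) : nat := (S N * S N)%nat.

Definition transfer_base (beta : R) (N : nat) : R := Rpower (2 * INR (schreier_len N)) (1 / beta).

Definition alpha_transfer (alpha beta : R) (N : nat) : R :=
  Rmin alpha 1 / (INR (S N) * transfer_base beta N).

Definition beta_transfer (beta : R) (N : nat) : R := Rmin beta 1 / (2 * INR (schreier_len N)).

Lemma schreier_len_ge1 N : 1 <= INR (schreier_len N).
Proof. apply (le_INR 1); unfold schreier_len; lia. Qed.

Lemma transfer_base_ge1 beta N : 0 < beta -> 1 <= transfer_base beta N.
Proof.
  intro hb. pose proof (schreier_len_ge1 N). unfold transfer_base.
  rewrite <- (Rpower_O (2 * INR (schreier_len N))) at 1; [|lra].
  apply Rle_Rpower; [lra|]. unfold Rdiv; rewrite Rmult_1_l; left; apply Rinv_0_lt_compat; auto.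
Qed.

Lemma transfer_base_pow beta N m : 0 < beta ->
  Rpower (transfer_base beta N) (beta * INR m) = INR ((2 * schreier_len N) ^ m).
Proof.
  intro hb. pose proof (schreier_len_ge1 N). unfold transfer_base.
  rewrite Rpower_mult. replace (1 / beta * (beta * INR m)) with (INR m) by (field; lra).
  rewrite Rpower_pow; [|lra]. rewrite pow_INR, mult_INR. reflexivity.
Qed.

Lemma alpha_transfer_pos alpha beta N : 0 < alpha -> 0 < beta -> 0 < alpha_transfer alpha beta N.
Proof.
  intros ha hb. pose proof (transfer_base_ge1 beta N hb).
  assert (1 <= INR (S N)) by (apply (le_INR 1); lia).
  assert (0 < Rmin alpha 1) by (apply Rmin_glb_lt; lra).
  unfold alpha_transfer, Rdiv. apply Rmult_lt_0_compat; [lra| apply Rinv_0_lt_compat; nra].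
Qed.

Lemma beta_transfer_pos beta N : 0 < beta -> 0 < beta_transfer beta N.
Proof.
  intros hb. pose proof (schreier_len_ge1 N). assert (0 < Rmin beta 1) by (apply Rmin_glb_lt; lra).
  unfold beta_transfer, Rdiv. apply Rmult_lt_0_compat; [lra| apply Rinv_0_lt_compat; lra].
Qed.

Lemma alpha_transfer_le alpha beta N v cu : 0 < alpha -> 0 < beta -> (cu <= S N * v)%nat ->
  alpha_transfer alpha beta N * INR cu <= INR cu /\
  alpha_transfer alpha beta N * INR cu <= alpha * INR v / transfer_base beta N.
Proof.
  intros ha hb hcuv. pose proof (transfer_base_ge1 beta N hb) as hC.
  set (C := transfer_base beta N) in *. set (SN := INR (S N)).
  assert (hSN : 1 <= SN) by (apply (le_INR 1); lia).
  assert (hmin : 0 < Rmin alpha 1 <= 1 /\ Rmin alpha 1 <= alpha)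
    by (split; [split; [apply Rmin_glb_lt; lra| apply Rmin_r]| apply Rmin_l]).
  assert (hcuv' : INR cu <= SN * INR v) by (unfold SN; rewrite <- mult_INR; apply le_INR; auto).
  assert (hcu0 : 0 <= INR cu) by apply pos_INR.
  unfold alpha_transfer; fold C SN.
  assert (hSNC : 1 <= SN * C) by nra.
  split.
  - apply (Rmult_le_reg_r (SN * C)); [nra|]. field_simplify; try lra.
    apply Rmult_le_compat_r; lra.
  - apply (Rmult_le_reg_r (SN * C)); [nra|]. field_simplify; try lra.
    apply Rle_trans with (alpha * (SN * INR v)); [apply Rmult_le_compat; lra| right; ring].
Qed.

Lemma beta_transfer_le beta N n m : 0 < beta -> (n <= 2 * schreier_len N * m)%nat ->
  beta_transfer beta N * INR n <= Rmin beta 1 * INR m.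
Proof.
  intros hb hn. pose proof (schreier_len_ge1 N).
  assert (hmin : 0 < Rmin beta 1) by (apply Rmin_glb_lt; lra).
  assert (hnR : INR n <= 2 * INR (schreier_len N) * INR m)
    by (apply le_INR in hn; rewrite !mult_INR in hn; replace (INR 2) with 2 in hn by (simpl; lra); lra).
  unfold beta_transfer. apply (Rmult_le_reg_r (2 * INR (schreier_len N))); [lra|].
  field_simplify; [|lra]. nra.
Qed.

(* Dividing the base by [C], where [C^(beta m) = (2k)^m >= k m + 1], absorbs the
   factor [k m + 1]. *)
Lemma Rpower_div_transfer_base_le alpha beta N v m c :
  0 < beta -> 1 < alpha * INR v / transfer_base beta N ->
  rpow (alpha * INR v) (beta * INR m) <= INR ((schreier_len N * m + 1) * c) ->
  Rpower (alpha * INR v / transfer_base beta N) (beta * INR m) <= INR c.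
Proof.
  intros hb hXC hgrowth.
  pose proof (transfer_base_ge1 beta N hb) as hC.
  set (k := schreier_len N) in *. set (C := transfer_base beta N) in *.
  set (X := alpha * INR v) in *.
  assert (hX0 : 0 < X).
  { apply (Rmult_lt_reg_r (/ C)); [apply Rinv_0_lt_compat; lra|].
    unfold Rdiv in hXC. rewrite Rmult_0_l; lra. }
  assert (hsplit : Rpower X (beta * INR m) = Rpower (X / C) (beta * INR m) * INR ((2 * k) ^ m)).
  { unfold k; rewrite <- (transfer_base_pow beta N m hb); fold C.
    rewrite Rpower_mult_distr; [|lra|lra]. f_equal. field; lra. }
  rewrite rpow_pos, hsplit, mult_INR in hgrowth; [|exact hX0].
  assert (hk : (1 <= k)%nat) by (unfold k, schreier_len; lia).
  assert (hkm1 : INR (k * m + 1) <= INR ((2 * k) ^ m))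
    by (apply le_INR, succ_mul_le_pow; exact hk).
  assert (hkm0 : 0 < INR (k * m + 1)) by (apply lt_0_INR; lia).
  assert (0 <= Rpower (X / C) (beta * INR m)) by (unfold Rpower; left; apply exp_pos).
  nra.
Qed.

(* The growth hypothesis is applied at [m = n / k]. *)
Lemma growth_transfer_real alpha beta N v cu n c :
  0 < alpha -> 0 < beta ->
  (cu <= S N * v)%nat -> (1 <= cu)%nat -> (cu <= c)%nat ->
  (forall m, (1 <= m)%nat -> (schreier_len N * m <= n)%nat ->
     rpow (alpha * INR v) (beta * INR m) <= INR ((schreier_len N * m + 1) * c)) ->
  rpow (alpha_transfer alpha beta N * INR cu) (beta_transfer beta N * INR n) <= INR c.
Proof.
  intros ha hb hcuv hcu hcuc hgrowth.
  set (k := schreier_len N) in *.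
  assert (hk : (1 <= k)%nat) by (unfold k, schreier_len; lia).
  destruct (alpha_transfer_le alpha beta N v cu ha hb hcuv) as [hxcu hxX].
  set (x := alpha_transfer alpha beta N * INR cu) in *.
  set (y := beta_transfer beta N * INR n).
  pose proof (transfer_base_ge1 beta N hb) as hC.
  assert (hx0 : 0 < x)
    by (apply Rmult_lt_0_compat; [apply alpha_transfer_pos; auto| apply lt_0_INR; lia]).
  assert (hy0 : 0 <= y)
    by (apply Rmult_le_pos; [left; apply beta_transfer_pos; auto| apply pos_INR]).
  assert (hcuc' : INR cu <= INR c) by (apply le_INR; exact hcuc).
  assert (hmin : Rmin beta 1 <= 1 /\ Rmin beta 1 <= beta) by (split; [apply Rmin_r| apply Rmin_l]).
  rewrite rpow_pos; [|exact hx0].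
  set (m := (n / k)%nat).
  assert (hn2 : (n <= 2 * k * (Nat.max m 1))%nat).
  { pose proof (Nat.mul_succ_div_gt n k ltac:(lia)) as hlt. fold m in hlt. nia. }
  destruct (Rle_lt_dec x 1) as [hx1|hx1]; [|destruct (Nat.eq_dec m 0) as [hm0|hm0]].
  1, 2: apply Rle_trans with (Rmax 1 x);
    [apply Rpower_le_max_one; auto| pose proof (le_INR 1 cu hcu); apply Rmax_lub; simpl in *; lra].
  { right. unfold y. rewrite hm0 in hn2.
    eapply Rle_trans; [apply (beta_transfer_le beta N n 1); auto| simpl; lra]. }
  replace (Nat.max m 1) with m in hn2 by lia.
  assert (hyb : y <= beta * INR m).
  { eapply Rle_trans; [apply (beta_transfer_le beta N n m); auto|].
    apply Rmult_le_compat_r; [apply pos_INR| lra]. }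
  apply Rle_trans with (Rpower (alpha * INR v / transfer_base beta N) (beta * INR m)).
  - apply Rle_trans with (Rpower (alpha * INR v / transfer_base beta N) y);
      [apply Rle_Rpower_l; lra| apply Rle_Rpower; lra].
  - apply Rpower_div_transfer_base_le; [exact hb| lra|].
    apply hgrowth; [lia| apply Nat.Div0.mul_div_le].
Qed.

Lemma perfect_of_not_virt_inf_center (G : Group) alpha beta N (H : G -> Prop) :
  0 < alpha -> 0 < beta -> admissible G alpha beta N ->
  is_subgroup G H -> fg_sub G H -> ~ virt_inf_center G H ->
  perfect_sub G H (alpha_transfer alpha beta N) (beta_transfer beta N).
Proof.
  intros ha hb hadm hH hfg hnv. split; [exact hfg|].
  intros L hL hLH hLi U [cu0 hcu0] hUL hgen.
  destruct (admissible_growth_subgroup G alpha beta N L hadm hL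
    (ex_intro _ U (conj (ex_intro _ cu0 hcu0) (conj hUL hgen)))
    (not_virt_inf_center_sub G H L hH hLH hLi hnv)) as [K [hK [hKL [hidx hKgrowth]]]].
  apply (index_le_weaken K L N (S N)) in hidx; [|lia].
  set (V := schreier_set U K (S N * S N)).
  destruct (card_at_most_card_is V _
    (card_at_most_schreier_set U K _ cu0 (card_is_at_most U cu0 hcu0))) as [v [hv _]].
  assert (hVgrowth : has_growth G V alpha beta).
  { apply hKgrowth; [exists v; exact hv| intros x [hx _]; exact hx|].
    apply (schreier G U L K (S N)); auto; lia. }
  split; [exists cu0; exact hcu0|]. intros cu hcu n c hn hc.
  destruct (Nat.eq_dec cu 0) as [->|hcu_pos].
  { rewrite Rmult_0_r, rpow_nonpos; [apply pos_INR| lra]. }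
  pose proof hcu as [[|u0 lu] [_ [hinu hlu]]]; [simpl in hlu; lia|].
  apply (growth_transfer_real alpha beta N v cu n c ha hb).
  - apply (card_gens_le_index_mul G U L K (S N)); auto; lia.
  - lia.
  - apply (card_le_card_pow_set U cu n c); auto.
  - intros m hm hkm.
    destruct (card_at_most_card_is _ _ (card_schreier_pow_set U K (S N)
      u0 n c m (proj1 (hinu u0) (or_introl eq_refl)) (card_is_at_most _ _ hc) hkm)) as [cvm [hcvm hle]].
    eapply Rle_trans; [apply (proj2 hVgrowth v hv m cvm hm hcvm)|].
    apply le_INR. unfold schreier_len. lia.
Qed.

(** * Infinite centres: failure of uniform growth *)

Lemma not_finite_nodup_list {T} (A : T -> Prop) : ~ finite_pred A ->
  forall m, exists l, NoDup l /\ length l = m /\ forall x, In x l -> A x.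
Proof.
  intros hinf m; induction m as [|m [l [hnd [hl hin]]]].
  - exists nil; split; [constructor| split; [reflexivity| intros x []]].
  - destruct (classic (exists x, A x /\ ~ In x l)) as [[x [hx hnx]]|hno].
    + exists (x :: l); split; [constructor; auto| split; [simpl; lia|]]. intros y [<-|hy]; auto.
    + exfalso; apply hinf. exists m, l; split; [exact hnd| split; [|exact hl]].
      intro x; split; [apply hin|]. intro hx. apply NNPP; intro hn; apply hno; exists x; auto.
Qed.

Lemma sq_lt_pow2 q : (5 <= q)%nat -> (q * q < 2 ^ q)%nat.
Proof. intro h; induction h; simpl; [lia|]. rewrite Nat.add_0_r. nia. Qed.

Lemma exists_pow_lt_pow4 M : exists n, (1 <= n)%nat /\ (S n ^ M < 4 ^ n)%nat.
Proof.
  set (q := (M + 5)%nat). exists (2 ^ (q - 1))%nat.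
  assert (hq : (2 ^ q = 2 * 2 ^ (q - 1))%nat) by (replace q with (S (q - 1)) at 1 by lia; reflexivity).
  assert (h1 : (1 <= 2 ^ (q - 1))%nat) by (apply (Nat.pow_le_mono_r 2 0); lia).
  split; [exact h1|].
  apply Nat.le_lt_trans with ((2 ^ q) ^ M)%nat; [apply Nat.pow_le_mono_l; lia|].
  rewrite <- Nat.pow_mul_r. replace 4%nat with (2 ^ 2)%nat by reflexivity. rewrite <- Nat.pow_mul_r.
  apply Nat.pow_lt_mono_r; [lia|]. pose proof (sq_lt_pow2 q ltac:(unfold q; lia)). unfold q in *. nia.
Qed.

(* Words of length [i] in [m] commuting letters are determined by the exponents. *)
Lemma card_at_most_pow_set_central (G : Group) (L : G -> Prop) (fl : list G) i :
  is_subgroup G L -> (forall x, In x fl -> center G L x) ->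
  card_at_most (pow_set (fun x => In x fl) i) (S i ^ length fl).
Proof.
  intro hL. revert i; induction fl as [|z fl IH]; intros i hc; simpl.
  - apply (card_at_most_sub _ (pow_set (fun x : G => False) i) (0 ^ i)); [intros x hx; exact hx| |].
    + apply card_at_most_pow_set. exists nil; split; [simpl; lia| intros x []].
    + destruct i; simpl; lia.
  - apply (card_at_most_sub _ (pow_set (fun x => z = x \/ In x fl) i) (S i * (1 * S i ^ length fl)));
      [intros x hx; exact hx| |lia].
    apply card_at_most_pow_set_union.
    + intros b a y hb hy. apply (proj2 (hc b (or_intror hb))).
      apply (pow_set_subgroup (fun y => z = y) L hL) with a; [|exact hy].
      intros w <-. apply (proj1 (hc z (or_introl eq_refl))).
    + intros a _. rewrite <- (Nat.pow_1_l a). apply card_at_most_pow_set.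
      exists (z :: nil); split; [simpl; lia| intros x <-; left; reflexivity].
    + intros c hci. apply (card_at_most_sub _ _ (S c ^ length fl) _ (fun x h => h));
        [apply IH; intros; apply hc; right; auto| apply Nat.pow_le_mono_l; lia].
Qed.

Lemma generates_union_sub (G : Group) (V F L : G -> Prop) :
  is_subgroup G L -> generates G V L -> subset F L -> generates G (fun x => V x \/ F x) L.
Proof.
  intros hL hgen hFL x; split.
  - apply gen_min; [exact hL|]. intros y [hy|hy]; [apply (generates_sub V L hgen)|apply hFL]; exact hy.
  - intros hx L' hL' hVL'. apply (proj2 (hgen x) hx L' hL'). intros y hy; apply hVL'; left; exact hy.
Qed.

Lemma finite_index_gens (G : Group) (H L : G -> Prop) :
  is_subgroup G H -> fg_sub G H -> is_subgroup G L -> subset L H -> finite_index G L H ->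
  exists V b, card_is V b /\ subset V L /\ generates G V L.
Proof.
  intros hH [U [[cu hcu] [hUH hgen]]] hL hLH [n0 hidx].
  apply (index_le_weaken L H n0 (S n0)) in hidx; [|lia].
  destruct (card_at_most_card_is _ _
    (card_at_most_schreier_set U L (S n0 * S n0) cu (card_is_at_most U cu hcu))) as [b [hb _]].
  exists (schreier_set U L (S n0 * S n0)), b. split; [exact hb| split; [intros x [hx _]; exact hx|]].
  apply (schreier G U H L (S n0)); auto; lia.
Qed.

Lemma central_count_lt_growth alpha beta B m cu n c :
  0 < alpha -> 0 < beta -> (1 <= B)%nat ->
  Rpower (4 * INR B) (1 / beta) <= alpha * INR m -> (m <= cu)%nat ->
  (S n ^ S m < 4 ^ n)%nat -> (c <= S n * (B ^ n * S n ^ m))%nat ->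
  INR c < rpow (alpha * INR cu) (beta * INR n).
Proof.
  intros ha hb hB hm hmcu hn hc.
  assert (hB' : 1 <= INR B) by (apply (le_INR 1); lia).
  assert (hbase : 0 < Rpower (4 * INR B) (1 / beta)) by (unfold Rpower; apply exp_pos).
  assert (hmcu' : INR m <= INR cu) by (apply le_INR; exact hmcu).
  assert (hn0 : 0 <= beta * INR n) by (apply Rmult_le_pos; [lra| apply pos_INR]).
  assert (hlow : INR (4 ^ n * B ^ n) <= Rpower (alpha * INR cu) (beta * INR n)).
  { rewrite mult_INR, !pow_INR, <- Rpow_mult_distr.
    replace (INR 4) with 4 by (simpl; lra). rewrite <- Rpower_pow; [|lra].
    replace (INR n) with (1 / beta * (beta * INR n)) at 1 by (field; lra).
    rewrite <- Rpower_mult. apply Rle_Rpower_l; [exact hn0|]. split; [lra|].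
    apply Rle_trans with (alpha * INR m); [exact hm| apply Rmult_le_compat_l; lra]. }
  assert (hup : (c < 4 ^ n * B ^ n)%nat).
  { assert (hBn : (1 <= B ^ n)%nat) by (rewrite <- (Nat.pow_1_l n); apply Nat.pow_le_mono_l; lia).
    rewrite Nat.pow_succ_r' in hn. nia. }
  apply lt_INR in hup. rewrite rpow_pos; [lra| nra].
Qed.

Lemma not_perfect_of_virt_inf_center (G : Group) (H : G -> Prop) alpha' beta' :
  0 < alpha' -> 0 < beta' -> is_subgroup G H -> fg_sub G H -> virt_inf_center G H ->
  ~ perfect_sub G H alpha' beta'.
Proof.
  intros ha hb hH hfg [L [hL [hLH [hLi hinf]]]] [_ hp].
  destruct (finite_index_gens G H L hH hfg hL hLH hLi) as [V0 [b [hb0 [hV0L hgV0]]]].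
  destruct (INR_archimed 1 (Rpower (4 * INR (S b)) (1 / beta') / alpha') ltac:(lra)) as [m hm].
  assert (hmR : Rpower (4 * INR (S b)) (1 / beta') <= alpha' * INR m).
  { apply (Rmult_le_reg_r (/ alpha')); [apply Rinv_0_lt_compat; exact ha|].
    replace (alpha' * INR m * / alpha') with (INR m) by (field; lra). unfold Rdiv in hm. lra. }
  destruct (not_finite_nodup_list _ hinf m) as [fl [hnd [hlen hfl]]].
  set (U := fun x => V0 x \/ In x fl).
  assert (hUL : subset U L) by (intros x [hx|hx]; [apply hV0L| apply hfl]; exact hx).
  destruct (card_at_most_card_is U (b + m)) as [cu [hcu _]].
  { pose proof hb0 as [lv [_ [hlv elv]]]. exists (lv ++ fl). split; [rewrite length_app; lia|].
    intros x [hx|hx]; apply in_or_app; [left; apply hlv; exact hx| right; exact hx]. }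
  assert (hmcu : (m <= cu)%nat).
  { pose proof hcu as [lu [_ [hlu elu]]]. rewrite <- hlen, <- elu.
    apply NoDup_incl_length; [exact hnd|]. intros x hx; apply hlu; right; exact hx. }
  assert (hgU : generates G U L)
    by (apply generates_union_sub; [exact hL| exact hgV0| intros x hx; exact (proj1 (hfl x hx))]).
  destruct (hp L hL hLH hLi U (ex_intro _ cu hcu) hUL hgU) as [_ hg].
  destruct (exists_pow_lt_pow4 (S m)) as [n [hn1 hn]].
  destruct (card_at_most_card_is (pow_set U n) (S n * (S b ^ n * S n ^ m))) as [c [hc hcle]].
  { apply card_at_most_pow_set_union.
    - intros z a y hz hy. apply (proj2 (hfl z hz)). exact (pow_set_subgroup V0 L hL hV0L a y hy).
    - intros a han. apply (card_at_most_sub _ _ (b ^ a) _ (fun x h => h));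
        [apply card_at_most_pow_set, card_is_at_most, hb0|].
      apply Nat.le_trans with (S b ^ a)%nat; [apply Nat.pow_le_mono_l| apply Nat.pow_le_mono_r]; lia.
    - intros c hcn. rewrite <- hlen.
      apply (card_at_most_sub _ _ (S c ^ length fl) _ (fun x h => h));
        [apply (card_at_most_pow_set_central G L); auto| apply Nat.pow_le_mono_l; lia]. }
  apply (Rlt_not_le _ _ (central_count_lt_growth alpha' beta' (S b) m cu n c ha hb
    ltac:(lia) hmR hmcu hn hcle)).
  exact (hg cu hcu n c hn1 hc).
Qed.

Theorem lemma5p6 (alpha beta : R) (N : nat) (ha : 0 < alpha) (hb : 0 < beta) :
  exists alpha' beta' : R, 0 < alpha' /\ 0 < beta' /\
    forall G : Group, admissible G alpha beta N ->
      forall H : G -> Prop, is_subgroup G H -> fg_sub G H ->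
        (virt_inf_center G H /\ ~ perfect_sub G H alpha' beta') \/
        (~ virt_inf_center G H /\ perfect_sub G H alpha' beta').
Proof.
  pose proof (alpha_transfer_pos alpha beta N ha hb) as ha'.
  pose proof (beta_transfer_pos beta N hb) as hb'.
  exists (alpha_transfer alpha beta N), (beta_transfer beta N).
  split; [exact ha'| split; [exact hb'|]].
  intros G hadm H hH hfg.
  destruct (classic (virt_inf_center G H)) as [hv|hnv].
  - left. split; [exact hv|]. exact (not_perfect_of_virt_inf_center G H _ _ ha' hb' hH hfg hv).
  - right. split; [exact hnv|].
    exact (perfect_of_not_virt_inf_center G alpha beta N H ha hb hadm hH hfg hnv).
Qed.
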